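(* Let $\ell\ge1$ be an integer and $S_1,\dots,S_m$ site states. For $n$ sufficiently large, let $S=S_1\otimes\cdots\otimes S_m\otimes V^{\otimes n}$. If the carrier $u_\ell=(\ell,0,0)$ is passed successively through $S_1,\dots,S_m$ and then the $n$ vacuum sites, each step applying the map $R$, then the final carrier state is again $u_\ell$; i.e. $u_\ell\otimes S\simeq S'\otimes u_\ell$ under repeated application of $R$, for some $S'$.
   Context: A site state is a triple $(d,e,f)$ of nonnegative integers with $d=e-f+1$; $V=(1,0,0)$. Carrier states are triples $(a,b,c)$ of nonnegative integers. The map $R$ sends a carrier $(a,b,c)$ and a site $(d,e,f)$ to a site $(d',e',f')$ and a carrier $(a',b',c')$ with $d'=d+\min(a+b,a+c,b+f)-\min(e+c,d+c,d+b)$, $e'=e+\min(a+b,a+c,b+f)-\min(a+e,d+f,e+f)$, $f'=f+\min(e+c,d+c,d+b)-\min(a+e,d+f,e+f)$, $a'=a-\min(a+b,a+c,b+f)+\min(e+c,d+c,d+b)$, $b'=b-\min(a+b,a+c,b+f)+\min(a+e,d+f,e+f)$, $c'=c-\min(e+c,d+c,d+b)+\min(a+e,d+f,e+f)$. (This $R$ is the tropicalization of a three-wire whurl relation; it preserves $a-b+c$ and $d-e+f$.) The notation $X\otimes S_1\otimes\cdots\otimes S_k\simeq S_1'\otimes\cdots\otimes S_k'\otimes X'$ means that passing carrier $X$ through $S_1,\dots,S_k$ in order via $R$ produces sites $S_j'$ and final carrier $X'$. *)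

(* states are integer triples (nonnegativity imposed as hypotheses). *)
From Stdlib Require Import ZArith List Lia.
Import ListNotations.
Open Scope Z_scope.

Definition triple := (Z * Z * Z)%type.

Definition is_site (s : triple) : Prop :=
  let '(d, e, f) := s in 0 <= d /\ 0 <= e /\ 0 <= f /\ d = e - f + 1.

Definition is_carrier (x : triple) : Prop :=
  let '(a, b, c) := x in 0 <= a /\ 0 <= b /\ 0 <= c.

Definition V : triple := (1, 0, 0).

Definition u (l : Z) : triple := (l, 0, 0).

Definition R (x s : triple) : triple * triple :=
  let '(a, b, c) := x in
  let '(d, e, f) := s in
  let m1 := Z.min (Z.min (a + b) (a + c)) (b + f) in
  let m2 := Z.min (Z.min (e + c) (d + c)) (d + b) in
  let m3 := Z.min (Z.min (a + e) (d + f)) (e + f) in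
  ((d + m1 - m2, e + m1 - m3, f + m2 - m3),
   (a - m1 + m2, b - m1 + m3, c - m2 + m3)).

Fixpoint pass (x : triple) (ss : list triple) : list triple * triple :=
  match ss with
  | [] => ([], x)
  | s :: ss' =>
      let '(s', x') := R x s in
      let '(rest, xf) := pass x' ss' in
      (s' :: rest, xf)
  end.

(* R conserves the charge a - b + c of the carrier, and passing through sites
   keeps its coordinates nonnegative.  When the charge is nonnegative, a vacuum
   site turns (a, b, c) into (a - b + m, 0, c - m) with m = min c (1 + b): it
   absorbs b at once, and afterwards every further vacuum moves one unit from c
   to a.  Hence after S_1, ..., S_m the carrier has charge l, and enough vacua
   bring it to (l, 0, 0) = u l. *)
From Stdlib Require Import ZArith List Lia.
Open Scope Z_scope.

Definition charge (x : triple) : Z := let '(a, b, c) := x in a - b + c.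

Lemma pass_cons_carrier x s ss :
  snd (pass x (s :: ss)) = snd (pass (snd (R x s)) ss).
Proof.
  simpl; destruct (R x s) as [s' x']; simpl.
  now destruct (pass x' ss).
Qed.

Lemma pass_app_carrier x A B :
  snd (pass x (A ++ B)) = snd (pass (snd (pass x A)) B).
Proof.
  revert x; induction A as [|s A IH]; intro x; [reflexivity|].
  simpl app; rewrite !pass_cons_carrier; apply IH.
Qed.

Lemma charge_R x s : charge (snd (R x s)) = charge x.
Proof. destruct x as [[a b] c], s as [[d e] f]; simpl; lia. Qed.

Lemma charge_pass x ss : charge (snd (pass x ss)) = charge x.
Proof.
  revert x; induction ss as [|s ss IH]; intro x; [reflexivity|].
  now rewrite pass_cons_carrier, IH, charge_R.
Qed.

Lemma R_carrier x s : is_site s -> is_carrier x -> is_carrier (snd (R x s)).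
Proof. destruct x as [[a b] c], s as [[d e] f]; simpl; lia. Qed.

Lemma pass_carrier x ss :
  Forall is_site ss -> is_carrier x -> is_carrier (snd (pass x ss)).
Proof.
  intros Hss; revert x; induction Hss as [|s ss Hs _ IH]; intros x Hx; [exact Hx|].
  rewrite pass_cons_carrier; apply IH, R_carrier; assumption.
Qed.

Lemma R_vacuum a b c : is_carrier (a, b, c) -> b <= a + c ->
  snd (R (a, b, c) V) = (a - b + Z.min c (1 + b), 0, c - Z.min c (1 + b)).
Proof.
  cbv [is_carrier R V snd]; intros Hx Hcharge.
  replace (Z.min (Z.min (a + b) (a + c)) (b + 0)) with b by lia.
  f_equal; [f_equal|]; lia.
Qed.

Lemma pass_vacua_absorbed (n : nat) a c : 0 <= a -> 0 <= c ->
  (Z.to_nat c <= n)%nat -> snd (pass (a, 0, c) (repeat V n)) = u (a + c).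
Proof.
  revert a c; induction n as [|n IH]; intros a c Ha Hc Hn.
  - simpl; unfold u; do 2 f_equal; lia.
  - simpl repeat; rewrite pass_cons_carrier, R_vacuum by (simpl; lia).
    rewrite IH by lia; unfold u; do 2 f_equal; lia.
Qed.

Lemma pass_vacua (n : nat) a b c : is_carrier (a, b, c) -> 0 <= charge (a, b, c) ->
  (S (Z.to_nat c) <= n)%nat -> snd (pass (a, b, c) (repeat V n)) = u (charge (a, b, c)).
Proof.
  intros Hx Hcharge Hn; destruct n as [|n]; [lia|].
  cbv [is_carrier charge] in Hx, Hcharge |- *.
  simpl repeat; rewrite pass_cons_carrier, R_vacuum by (cbv [is_carrier]; lia).
  rewrite pass_vacua_absorbed by lia.
  unfold u; do 2 f_equal; lia.
Qed.

Theorem mainTheorem7 (l : Z) (Ss : list triple) :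
  1 <= l ->
  Forall is_site Ss ->
  exists N : nat, forall n : nat, (N <= n)%nat ->
    exists S' : list triple, pass (u l) (Ss ++ repeat V n) = (S', u l).
Proof.
  intros Hl HSs.
  assert (Hcarrier : is_carrier (snd (pass (u l) Ss))).
  { apply pass_carrier; [exact HSs | simpl; lia]. }
  assert (Hcharge : charge (snd (pass (u l) Ss)) = l)
    by (rewrite charge_pass; simpl; lia).
  destruct (snd (pass (u l) Ss)) as [[a b] c] eqn:Eafter.
  exists (S (Z.to_nat c)); intros n Hn.
  exists (fst (pass (u l) (Ss ++ repeat V n))).
  rewrite (surjective_pairing (pass (u l) _)); f_equal.
  rewrite pass_app_carrier, Eafter, pass_vacua by (assumption || lia).
  now rewrite Hcharge.
Qed.
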